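(* Let $w\in\mathbb Q$ with $w>-\mu_\kappa$, and let $k\in\{1,\dots,\kappa\}$ be such that $-\mu_k\leq w<-\mu_{k-1}$ (convention $\mu_0=-\infty$). Then $\epsilon(w)$ is greater than or equal to the minimum of the set $$\{\epsilon(w')\,\ell^{d_{w,w'}-\alpha_{k-1}}: w'\in\Delta(w)\}\cup\{-\mu_{k-1}-w,\ \min(\pi(\Psi(w))\setminus\{w\})-w\},$$ where $\min\emptyset=+\infty$ and $d_{w,w'}=\min\{\alpha\in\{0,\dots,n\}:\exists(\ell^\alpha,\beta)\in\mathcal P(L),\ w'=\frac{\psi(w)-\beta}{\ell^\alpha}\}$; this minimum is a positive element of $\mathbb Q_{>0}\cup\{+\infty\}$.
   Context: Let $\mathbf K$ be a field and $\ell\geq 2$ an integer. Let $L=a_n\phi_\ell^n+\dots+a_0$ with $n\geq1$, $a_i\in\mathbf K[z]$, $a_0a_n\neq0$, where $\phi_\ell(f)(z)=f(z^\ell)$ acting on Hahn series with coefficients in $\mathbf K$ and value group $\mathbb Q$. Let $\mathcal P(L)=\{(\ell^i,j): 0\le i\le n,\ j\in\operatorname{supp} a_i\}$. The Newton polygon of $L$ is the convex hull of $\{(\ell^i,j): 0\le i\le n,\ j\geq\operatorname{val} a_i\}\subset\mathbb R^2$; its non-vertical edges have slopes $\mu_1<\dots<\mu_\kappa$, $\mathcal S(L)=\{\mu_1,\dots,\mu_\kappa\}$; its vertices ordered by increasing abscissa are $p_0,\dots,p_\kappa$ with $p_k=(\ell^{\alpha_k},\beta_k)$, $\beta_k=\operatorname{val}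 a_{\alpha_k}$, the edge of slope $\mu_k$ joining $p_{k-1}$ and $p_k$. Define $\Psi(v)=\{v\ell^i+j:(\ell^i,j)\in\mathcal P(L)\}$, $\psi(v)=\min\Psi(v)$, $\pi(q)=\max\{(q-j)/\ell^i:(\ell^i,j)\in\mathcal P(L)\}$, and $\Delta(w)=\left\{\frac{\psi(w)-\beta}{\ell^\alpha}:(\ell^\alpha,\beta)\in\mathcal P(L)\right\}\setminus\{w\}$. Let $\mathcal V_0=-\mathcal S(L)$, $\mathcal V_{i+1}=\bigcup_{v\in\mathcal V_i}\pi(\Psi(v))$, $\mathcal V=\bigcup_{i\ge0}\mathcal V_i$ (a well-ordered set). For $v\in\mathbb Q$ let $\epsilon(v)=\min\{u\in\mathcal V: u>v\}-v\in\mathbb Q_{>0}\cup\{+\infty\}$ ($+\infty$ if the set is empty). *)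

From HB Require Import structures.
From mathcomp Require Import all_boot all_order all_algebra.
From mathcomp Require Import all_classical all_reals ereal.
Set Implicit Arguments. Unset Strict Implicit. Unset Printing Implicit Defensive.
Import Order.TTheory GRing.Theory Num.Theory.
Local Open Scope ring_scope.

Section MahlerDefs.
Variables (K : fieldType) (l n : nat) (a : nat -> {poly K}).
(* The operator L = a_n phi_l^n + ... + a_0 is encoded by l, n and the
   coefficients a 0, ..., a n (values of a beyond n are ignored). *)

Definition valp (p : {poly K}) : nat := find (fun c => c != 0) p.

Definition suppp (p : {poly K}) : seq nat :=
  [seq j <- iota 0 (size p) | p`_j != 0].

(* P(L): the pair (i, j) stands for the point (l^i, j) *)
Definition PL : seq (nat * nat) :=
  [seq (i, j) | i <- iota 0 n.+1, j <- suppp (a i)].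

Definition lpow (i : nat) : rat := (l ^ i)%:R.

(* indices i with a_i <> 0; the polygon is the convex hull of the points
   (l^i, j), j >= val a_i, whose lower boundary has vertices among
   (l^i, val a_i) *)
Definition nzidx : seq nat := [seq i <- iota 0 n.+1 | a i != 0].

Definition hval (mu : rat) (i : nat) : rat := (valp (a i))%:R - mu * lpow i.

(* indices of the points (l^i, val a_i) lying on the supporting line of
   slope mu (the line of slope mu touching the polygon from below),
   in increasing order of abscissa *)
Definition touch (mu : rat) : seq nat :=
  [seq i <- nzidx | all (fun j => hval mu i <= hval mu j) nzidx].

(* a non-vertical edge of slope mu exists iff the supporting line of slope
   mu meets the polygon in at least two distinct points (l^i, val a_i);
   any such slope is the slope between two of these points *)
Definition cand_slopes : seq rat :=
  [seq ((valp (a j))%:R - (valp (a i))%:R) / (lpow j - lpow i)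
     | i <- nzidx, j <- [seq j <- nzidx | (i < j)%N]].

Definition slopes : seq rat :=
  sort <=%R (undup [seq mu <- cand_slopes | (1 < size (touch mu))%N]).

Definition kappa : nat := size slopes.

Definition mu (k : nat) : rat := nth 0 slopes k.-1.

(* alpha_{k-1}: exponent of the left endpoint p_{k-1} of the edge of slope mu_k *)
Definition alpha_left (k : nat) : nat := head 0%N (touch (mu k)).

Definition smin (s : seq rat) : rat := foldr Order.min (head 0 s) s.
Definition smax (s : seq rat) : rat := foldr Order.max (head 0 s) s.

Definition Psi (v : rat) : seq rat :=
  [seq v * lpow p.1 + (p.2)%:R | p <- PL].
Definition psi (v : rat) : rat := smin (Psi v).
Definition pi (q : rat) : rat :=
  smax [seq (q - (p.2)%:R) / lpow p.1 | p <- PL].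
Definition piPsi (v : rat) : seq rat := [seq pi q | q <- Psi v].

Definition Delta (w : rat) : seq rat :=
  [seq x <- [seq (psi w - (p.2)%:R) / lpow p.1 | p <- PL] | x != w].

Definition dww (w w' : rat) : nat :=
  \big[minn/n]_(p <- PL | w' == (psi w - (p.2)%:R) / lpow p.1) p.1.

Fixpoint Vi (i : nat) : seq rat :=
  match i with
  | 0 => [seq - m | m <- slopes]
  | i.+1 => flatten [seq piPsi v | v <- Vi i]
  end.

Definition inV (u : rat) : Prop := exists i, u \in Vi i.

(* epsilon(v) = min {u in V : u > v} - v, +oo if the set is empty.
   Computed as an infimum in the extended reals (V is well ordered, so
   this infimum is the minimum). *)
Definition eps (R : realType) (v : rat) : \bar R :=
  ereal_inf [set ((ratr (u - v) : R))%:E | u in [set u | inV u /\ v < u]].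

End MahlerDefs.

From Pilot Require Import Defs.
From HB Require Import structures.
From mathcomp Require Import all_boot all_order all_algebra.
From mathcomp Require Import all_classical all_reals ereal.
From mathcomp Require Import ring lra.
Set Implicit Arguments. Unset Strict Implicit. Unset Printing Implicit Defensive.
Import Order.TTheory GRing.Theory Num.Theory.
Local Open Scope classical_set_scope.
Local Open Scope ring_scope.

(* Every [u] of [V] is either some [- mu_j] or of the form [pi (v l^i + j)] with
   [(l^i, j)] in [P(L)] and [v] in [V] of smaller depth; induct on the depth.
   If [w < v], then [v <= u] and induction applies.  If [v = w], then [u] is in
   [pi(Psi(w))].  If [v < w], then [w' := (psi(w) - j) / l^i] lies in [Delta(w)]
   below [v], so [eps(w') <= v - w']; since [psi(w)] is attained at a point of
   [P(L)] of abscissa at most [l^alpha_{k-1}], rescaling by [l^(i - alpha_{k-1})]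
   bounds this by [u - w].  Finally, a depth-0 element [- mu_j > w >= - mu_k]
   has [j < k], hence [- mu_j >= - mu_{k-1}].
   That the infimum defining [eps] is a minimum, hence a positive rational,
   comes from the well-ordering of [V]: it is the closure of a finite set under
   finitely many monotone inflationary maps, which admits no infinite descending
   chain by a minimal bad sequence argument. *)

Lemma foldr_sel_mem (T : eqType) (op : T -> T -> T) (x0 : T) (s : seq T) :
  (forall x y, op x y = x \/ op x y = y) -> foldr op x0 s \in x0 :: s.
Proof.
move=> op_sel; elim: s => [|y s IH] /=; first exact: mem_head.
have [->|->] := op_sel y (foldr op x0 s); first by rewrite !inE eqxx orbT.
by move: IH; rewrite !inE => /orP[->|->]; rewrite ?orbT.
Qed.

Lemma smin_le s x : x \in s -> smin s <= x.
Proof. by move=> xs; rewrite /smin foldrE; exact: ge_bigmin_seq. Qed.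

Lemma smax_ge s x : x \in s -> x <= smax s.
Proof. by move=> xs; rewrite /smax foldrE; exact: le_bigmax_seq. Qed.

Lemma smin_mem s : s != [::] -> smin s \in s.
Proof.
case: s => // y s _; rewrite /smin /=.
have sel (x z : rat) : Order.min x z = x \/ Order.min x z = z.
  by case: (leP x z); [left|right].
have /= := @foldr_sel_mem _ Order.min y (y :: s) sel.
by rewrite inE => /orP[/eqP->|]; rewrite ?mem_head.
Qed.

Lemma smax_mem s : s != [::] -> smax s \in s.
Proof.
case: s => // y s _; rewrite /smax /=.
have sel (x z : rat) : Order.max x z = x \/ Order.max x z = z.
  by case: (leP x z); [right|left].
have /= := @foldr_sel_mem _ Order.max y (y :: s) sel.
by rewrite inE => /orP[/eqP->|]; rewrite ?mem_head.
Qed.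

Section WellOrder.
Local Open Scope order_scope.

Definition infinitely_often (P : nat -> Prop) := forall N, exists2 m, (N <= m)%N & P m.

Lemma not_infinitely_often (P : nat -> Prop) :
  ~ infinitely_often P -> exists N, forall m, (N <= m)%N -> ~ P m.
Proof.
move=> fin_P; apply: contrapT => all_P; apply: fin_P => N; apply: contrapT => none_P.
by apply: all_P; exists N => m Nm Pm; apply: none_P; exists m.
Qed.

Lemma infinitely_often_pigeonhole (I : eqType) (s : seq I) (Q : nat -> I -> Prop) :
  infinitely_often (fun m => exists2 p, p \in s & Q m p) ->
  exists2 p, p \in s & infinitely_often (Q^~ p).
Proof.
elim: s => [|x s IH] io_s; first by have [m _ []] := io_s 0%N.
have [io_x|fin_x] := pselect (infinitely_often (Q^~ x)).
  by exists x; rewrite ?mem_head.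
have [N0 not_x] := not_infinitely_often fin_x.
have [|p ps io_p] := IH; last by exists p; rewrite ?inE ?ps ?orbT.
move=> N; have [m] := io_s (maxn N N0); rewrite geq_max => /andP[Nm N0m].
case=> p; rewrite inE => /predU1P[->|ps] Qmp; first by case: (not_x m N0m).
by exists m => //; exists p.
Qed.

Lemma infinitely_often_subseq (P : nat -> Prop) : infinitely_often P ->
  exists sigma : nat -> nat, (forall j, sigma j < sigma j.+1)%N /\ forall j, P (sigma j).
Proof.
move=> io_P; have /choice[next next_spec] : forall m, exists m', (m < m')%N /\ P m'.
  by move=> m; have [m' ? ?] := io_P m.+1; exists m'.
exists (fun j => iter j.+1 next 0%N).
by split=> j; [case: (next_spec (iter j.+1 next 0%N))|case: (next_spec (iter j next 0%N))].
Qed.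

Lemma decreasing_lt {d} {T : porderType d} (h : nat -> T) :
  (forall m, h m.+1 < h m) -> {homo h : i j / (i < j)%N >-> j < i}.
Proof. exact: @homo_ltn _ h (fun x y => y < x) (fun y x z yx zy => lt_trans zy yx). Qed.

Lemma decreasing_not_infinitely_often {d} {T : porderType d} (h : nat -> T) x :
  (forall m, h m.+1 < h m) -> ~ infinitely_often (fun m => h m = x).
Proof.
move=> /decreasing_lt h_lt io_x.
have [m1 _ h1] := io_x 0%N; have [m2 m12 h2] := io_x m1.+1.
by have := h_lt _ _ m12; rewrite h1 h2 ltxx.
Qed.

Section ClosureWellOrdered.
Context {disp : Order.disp_t} {T : orderType disp} {I : eqType}.
Variables (G : seq I) (g : I -> T -> T) (V : nat -> seq T).
Hypothesis g_mono : forall p, p \in G -> {homo g p : x y / x <= y}.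
Hypothesis g_infl : forall p x, p \in G -> x <= g p x.
Hypothesis V_succ : forall d u, u \in V d.+1 ->
  exists2 p, p \in G & exists2 v, v \in V d & u = g p v.

Definition in_closure (u : T) := exists d, u \in V d.

Definition descending_chain (h : nat -> T) :=
  forall m, in_closure (h m) /\ h m.+1 < h m.

Definition starts_descent (x : T) := exists2 h, descending_chain h & h 0%N = x.

(* [y] is a term that may follow [x] in a minimal bad sequence. *)
Definition least_depth_step (x y : T) (d : nat) :=
  [/\ starts_descent y, y < x, y \in V d &
      forall y' d', starts_descent y' -> y' < x -> y' \in V d' -> (d <= d')%N].

Lemma exists_least_depth_step x : starts_descent x -> exists y d, least_depth_step x y d.
Proof.
move=> [h h_chain h0]; have [[d1 hd1] _] := h_chain 1%N.
have has_depth : exists d, `[< exists y, [/\ starts_descent y, y < x & y \in V d] >].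
  exists d1; apply/asboolP; exists (h 1%N); split; rewrite -?h0; last by [].
  - by exists (fun m => h m.+1).
  - by case: (h_chain 0%N).
case: (ex_minnP has_depth) => d /asboolP[y [Dy yx yd]] d_min.
by exists y, d; split => // y' d' Dy' y'x y'd; apply: d_min; apply/asboolP; exists y'.
Qed.

Lemma minimal_descent u0 : starts_descent u0 ->
  exists (h : nat -> T) (ds : nat -> nat), forall m, least_depth_step (h m) (h m.+1) (ds m).
Proof.
move=> D0; have /choice[next next_spec] : forall x, exists yd : T * nat,
    starts_descent x -> least_depth_step x yd.1 yd.2.
  move=> x; have [Dx|nDx] := pselect (starts_descent x); last first.
    by exists (x, 0%N) => /nDx.
  by have [y [d step]] := exists_least_depth_step Dx; exists (y, d).
pose h m := iter m (fun x => (next x).1) u0.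
have Dh m : starts_descent (h m) by elim: m => //= m /next_spec[].
by exists h, (fun m => (next (h m)).2) => m; apply: next_spec.
Qed.

Section MinimalDescent.
Variables (h : nat -> T) (ds : nat -> nat).
Hypothesis h_min : forall m, least_depth_step (h m) (h m.+1) (ds m).

Let h_decr m : h m.+1 < h m. Proof. by case: (h_min m). Qed.

Lemma minimal_descent_depth0_finite : ~ infinitely_often (fun m => ds m = 0%N).
Proof.
move=> io0; have [|x _] := @infinitely_often_pigeonhole _ (V 0) (fun m x => h m.+1 = x).
  move=> N; have [m Nm ds0] := io0 N; exists m => //; exists (h m.+1) => //.
  by case: (h_min m); rewrite ds0.
exact: (@decreasing_not_infinitely_often _ _ (fun m => h m.+1)).
Qed.

(* If from some point on every term is an image [g p v], some [g p] occurs
   infinitely often; the corresponding preimages [v] descend and have smaller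
   depth, contradicting minimality. *)
Lemma minimal_descent_depth_positive_finite N :
  ~ (forall m, (N <= m)%N -> (0 < ds m)%N).
Proof.
move=> ds_pos.
pose D m p := (0 < ds m)%N /\ exists2 v, v \in V (ds m).-1 & h m.+1 = g p v.
have [|p pG io_p] := @infinitely_often_pigeonhole _ G D.
  move=> N'; exists (maxn N N'); first by rewrite leq_maxr.
  have dpos := ds_pos _ (leq_maxl N N').
  case: (h_min (maxn N N')) => _ _ + _; rewrite -(prednK dpos) => /V_succ[p pG [v vV Ehv]].
  by exists p => //; split => //; exists v.
have [sigma [sigma_incr Dsigma]] := infinitely_often_subseq io_p.
have /choice[v v_spec] : forall j,
    exists v, v \in V (ds (sigma j)).-1 /\ h (sigma j).+1 = g p v.
  by move=> j; have [_ [v ? ?]] := Dsigma j; exists v.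
have v_decr j : v j.+1 < v j.
  rewrite ltNge; apply/negP => /(g_mono pG); rewrite -(v_spec j).2 -(v_spec j.+1).2.
  by apply/negP; rewrite -ltNge; apply: (decreasing_lt h_decr); rewrite ltnS.
have Dv0 : starts_descent (v 0%N).
  by exists v => // j; split; [exists (ds (sigma j)).-1; case: (v_spec j)|].
have v0_lt : v 0%N < h (sigma 0%N).
  apply: le_lt_trans (g_infl (v 0%N) pG) _; rewrite -(v_spec 0%N).2; exact: h_decr.
case: (h_min (sigma 0%N)) => _ _ _ /(_ _ _ Dv0 v0_lt (v_spec 0%N).1).
by case: (Dsigma 0%N) => + _; case: (ds _) => //= d _; rewrite ltnn.
Qed.

End MinimalDescent.

Lemma no_descending_chain h : ~ descending_chain h.
Proof.
move=> h_chain; have [h' [ds h'_min]] := minimal_descent (ex_intro2 _ _ h h_chain erefl).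
have [io0|/not_infinitely_often[N ds_neq0]] :=
  pselect (infinitely_often (fun m => ds m = 0%N)).
  exact: (minimal_descent_depth0_finite h'_min).
apply: (minimal_descent_depth_positive_finite h'_min (N := N)) => m Nm.
by rewrite lt0n; apply/eqP; apply: ds_neq0.
Qed.

Lemma closure_well_ordered (A : set T) : A `<=` in_closure -> A !=set0 ->
  exists2 x, A x & forall y, A y -> x <= y.
Proof.
move=> A_V [x0 Ax0]; apply: contrapT => no_min.
have /choice[next next_spec] : forall x, exists y, A x -> A y /\ y < x.
  move=> x; have [Ax|nAx] := pselect (A x); last by exists x => /nAx.
  apply: contrapT => no_below; apply: no_min; exists x => // y Ay.
  by rewrite leNgt; apply/negP => yx; apply: no_below; exists y.
have A_iter m : A (iter m next x0) by elim: m => //= m /next_spec[].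
apply: (@no_descending_chain (fun m => iter m next x0)) => m.
by split; [exact: A_V | case: (next_spec _ (A_iter m))].
Qed.

End ClosureWellOrdered.

End WellOrder.

Definition pos_rat_or_infty (R : realType) (x : \bar R) :=
  x = +oo%E \/ exists q : rat, 0 < q /\ x = ((ratr q : R))%:E.

Section PosRatOrInfty.
Variable R : realType.
Implicit Types x y : \bar R.

Lemma pos_rat_or_infty_gt0 x : pos_rat_or_infty x -> (0 < x)%E.
Proof. by case=> [->|[q [q_gt0 ->]]]; rewrite ?ltey // lte_fin ltr0q. Qed.

Lemma pos_rat_or_infty_min x y :
  pos_rat_or_infty x -> pos_rat_or_infty y -> pos_rat_or_infty (Order.min x y).
Proof. by rewrite minEle; case: ifP. Qed.

Lemma pos_rat_or_infty_bigmin (I : eqType) (r : seq I) (F : I -> \bar R) :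
  (forall i, i \in r -> pos_rat_or_infty (F i)) ->
  pos_rat_or_infty (\big[Order.min/+oo%E]_(i <- r) F i).
Proof.
move=> F_pos; rewrite big_seq; apply: big_ind => //; first by left.
exact: pos_rat_or_infty_min.
Qed.

Lemma pos_rat_or_infty_mulr x (c : rat) : pos_rat_or_infty x -> 0 < c ->
  pos_rat_or_infty (x * (ratr c : R)%:E)%E.
Proof.
move=> [->|[q [q_gt0 ->]]] c_gt0; first by left; rewrite gt0_mulye // lte_fin ltr0q.
by right; exists (q * c); rewrite mulr_gt0 // -EFinM rmorphM.
Qed.

End PosRatOrInfty.

Lemma rescaled_gap_le (F : realFieldType) (v w u q ps b b' La Li : F) :
  0 < La -> 0 < Li -> q = v * La + b -> w * Li + b' <= ps -> (q - b') / Li <= u ->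
  (v - (ps - b) / La) * (La / Li) <= u - w.
Proof.
move=> La_gt0 Li_gt0 -> ps_ge; rewrite !ler_pdivrMr // => u_ge.
have -> : (v - (ps - b) / La) * (La / Li) = (v * La + b - ps) / Li.
  by field; rewrite !lt0r_neq0.
by rewrite ler_pdivrMr //; lra.
Qed.

Section MahlerOperator.
Variables (K : fieldType) (l n : nat) (a : nat -> {poly K}).
Hypothesis l_ge2 : (2 <= l)%N.
Hypothesis a0_neq0 : a 0%N != 0.

Local Notation PL := (PL n a).
Local Notation lpow := (lpow l).
Local Notation psi := (psi l n a).
Local Notation pi := (Defs.pi l n a).

Lemma mem_suppp (p : {poly K}) j : (j \in suppp p) = (j < size p)%N && (p`_j != 0).
Proof. by rewrite mem_filter mem_iota andbC. Qed.

Lemma valp_le (p : {poly K}) j : p`_j != 0 -> (valp p <= j)%N.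
Proof. by move=> pj; rewrite leqNgt; apply/negP => /(before_find 0); rewrite pj. Qed.

Lemma valp_suppp (p : {poly K}) : p != 0 -> valp p \in suppp p.
Proof.
move=> p_neq0; have p_has : has (fun c => c != 0) p.
  apply/hasP; exists (lead_coef p); last by rewrite lead_coef_eq0.
  by rewrite lead_coefE mem_nth // prednK // size_poly_gt0.
by rewrite mem_suppp -has_find p_has (nth_find 0 p_has).
Qed.

Lemma mem_PL i j : ((i, j) \in PL) = (i <= n)%N && (j \in suppp (a i)).
Proof.
apply/allpairsPdep/andP => [[x [y [+ yin [-> ->]]]]|[ilt jin]].
  by rewrite mem_iota.
by exists i, j; rewrite mem_iota.
Qed.

Lemma mem_nzidx i : (i \in nzidx n a) = (i <= n)%N && (a i != 0).
Proof. by rewrite mem_filter mem_iota andbC. Qed.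

Lemma PL_nzidx i j : (i, j) \in PL -> i \in nzidx n a /\ (valp (a i) <= j)%N.
Proof.
rewrite mem_PL mem_suppp mem_nzidx => /andP[-> /andP[_ aij]]; split; last exact: valp_le.
by apply: contraTneq aij => ->; rewrite coef0 eqxx.
Qed.

Lemma nzidx_PL i : i \in nzidx n a -> (i, valp (a i)) \in PL.
Proof. by rewrite mem_nzidx mem_PL => /andP[-> /valp_suppp ->]. Qed.

Lemma PL_neq0 : PL != [::].
Proof.
by have := @nzidx_PL 0%N; rewrite mem_nzidx a0_neq0; case: PL => // /(_ isT).
Qed.

Lemma lpow_gt0 i : 0 < lpow i.
Proof. by rewrite ltr0n expn_gt0; case: l l_ge2. Qed.

Lemma lpow_lt i j : (i < j)%N -> lpow i < lpow j.
Proof. by move=> ij; rewrite ltr_nat ltn_exp2l. Qed.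

Lemma exprz_lpow (i j : nat) : (l%:R : rat) ^ ((i : int) - (j : int)) = lpow i / lpow j.
Proof.
have l_neq0 : (l%:R : rat) != 0 by rewrite pnatr_eq0; case: l l_ge2.
by rewrite expfzDr // -exprnN /Defs.lpow !natrX.
Qed.

Lemma psi_le v p : p \in PL -> psi v <= v * lpow p.1 + (p.2)%:R.
Proof. by move=> pPL; apply/smin_le/map_f. Qed.

Lemma psi_mem v : exists2 p, p \in PL & psi v = v * lpow p.1 + (p.2)%:R.
Proof. by apply/mapP/smin_mem; rewrite -size_eq0 size_map size_eq0 PL_neq0. Qed.

Lemma pi_ge q p : p \in PL -> (q - (p.2)%:R) / lpow p.1 <= pi q.
Proof. by move=> pPL; apply/smax_ge/(map_f (fun p => (q - (p.2)%:R) / lpow p.1)). Qed.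

Lemma pi_mem q : exists2 p, p \in PL & pi q = (q - (p.2)%:R) / lpow p.1.
Proof. by apply/mapP/smax_mem; rewrite -size_eq0 size_map size_eq0 PL_neq0. Qed.

Lemma pi_mono : {homo pi : q q' / q <= q'}.
Proof.
move=> q q' qq'; have [p pPL ->] := pi_mem q; apply: le_trans (pi_ge q' pPL).
by rewrite ler_pM2r ?invr_gt0 ?lpow_gt0 // lerD2r.
Qed.

Definition pi_shift (p : nat * nat) (v : rat) := pi (v * lpow p.1 + (p.2)%:R).

Lemma pi_shift_mono p : {homo pi_shift p : x y / x <= y}.
Proof. by move=> x y xy; apply: pi_mono; rewrite lerD2r ler_pM2r ?lpow_gt0. Qed.

Lemma pi_shift_ge p x : p \in PL -> x <= pi_shift p x.
Proof. by move=> pPL; apply: le_trans (pi_ge _ pPL); rewrite addrK mulfK ?lt0r_neq0 ?lpow_gt0. Qed.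

Lemma Vi_succ d u : u \in Vi l n a d.+1 ->
  exists2 p, p \in PL & exists2 v, v \in Vi l n a d & u = pi_shift p v.
Proof.
by move=> /flattenP[_ /mapP[v vV ->] /mapP[_ /mapP[p pPL ->] ->]]; exists p => //; exists v.
Qed.

Lemma inV_well_ordered (A : set rat) : A `<=` inV l n a -> A !=set0 ->
  exists2 x, A x & forall y, A y -> x <= y.
Proof.
apply: (closure_well_ordered (G := PL) (g := pi_shift)).
- by move=> p _; apply: pi_shift_mono.
- by move=> p x; apply: pi_shift_ge.
- exact: Vi_succ.
Qed.

Lemma eps_le (R : realType) u v : inV l n a u -> v < u ->
  (eps l n a R v <= (ratr (u - v) : R)%:E)%E.
Proof. by move=> uV vu; apply: ereal_inf_lbound; exists u. Qed.

Lemma le_eps (R : realType) v (x : \bar R) :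
  (forall u, inV l n a u -> v < u -> (x <= (ratr (u - v) : R)%:E)%E) ->
  (x <= eps l n a R v)%E.
Proof. by move=> x_le; apply/ereal_infP => _ [u [uV vu] <-]; apply: x_le. Qed.

Lemma eps_pos_rat_or_infty (R : realType) v : pos_rat_or_infty (eps l n a R v).
Proof.
have [[u [uV vu]]|none] := pselect (exists u, inV l n a u /\ v < u); last first.
  by left; apply/eqP; rewrite eq_le leey le_eps // => u uV vu; case: none; exists u.
have above_sub : [set u | inV l n a u /\ v < u] `<=` inV l n a by move=> x [].
have [u0 [u0V vu0] u0_min] := inV_well_ordered above_sub (ex_intro _ u (conj uV vu)).
right; exists (u0 - v); split; first by rewrite subr_gt0.
apply/eqP; rewrite eq_le eps_le //=; apply: le_eps => u' u'V vu'.
by rewrite lee_fin ler_rat lerD2r u0_min.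
Qed.

Local Notation slopes := (slopes l n a).
Local Notation mu := (mu l n a).
Local Notation alpha_left := (alpha_left l n a).
Variable k : nat.
Hypothesis k_range : (1 <= k <= kappa l n a)%N.

Lemma slopes_nth_mono i j : (i <= j < size slopes)%N ->
  nth 0 slopes i <= nth 0 slopes j.
Proof.
case/andP=> ij js; apply: (sorted_leq_nth le_trans lexx 0 (sort_sorted le_total _)) => //.
by rewrite inE (leq_ltn_trans ij js).
Qed.

Lemma mu_in_slopes : mu k \in slopes.
Proof. by case/andP: k_range => k_gt0 k_le; apply: mem_nth; rewrite -(prednK k_gt0) in k_le. Qed.

(* If [psi w] is attained right of [p_{k-1}], it is also attained at [p_{k-1}]:
   this vertex lies on the supporting line of slope [mu_k] and [w >= - mu_k]. *)
Lemma psi_attained_left w : - mu k <= w ->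
  exists i b, [/\ (i, b) \in PL, (i <= alpha_left k)%N & w * lpow i + b%:R <= psi w].
Proof.
move=> hw; have := mu_in_slopes; rewrite mem_sort mem_undup mem_filter => /andP[].
rewrite /alpha_left; case Et: touch => [|i0 t] // _ _ /=.
have := mem_head i0 t; rewrite -Et mem_filter => /andP[/allP i0_low i0_nz].
have [[i1 j1] p1PL psiE] := psi_mem w; have [i1_nz vj1] := PL_nzidx p1PL.
have [i1_le|i0_lt] := leqP i1 i0; first by exists i1, j1; rewrite psiE.
exists i0, (valp (a i0)); split => //; first exact: nzidx_PL.
have := i0_low _ i1_nz; have := lpow_lt i0_lt; rewrite /hval psiE /=.
rewrite -(ler_nat rat) in vj1; move: hw; nra.
Qed.

Lemma Vi0_above w u : - mu k <= w -> u \in Vi l n a 0 -> w < u ->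
  k != 1%N /\ - mu k.-1 <= u.
Proof.
case/andP: k_range => k_gt0 k_le hw /mapP[x xS ->] wx.
have k_lt : (k.-1 < size slopes)%N by rewrite prednK.
have x_lt := index_mem x slopes; rewrite xS in x_lt.
have [k_le_x|x_lt_k] := leqP k.-1 (index x slopes).
  have : mu k <= x by rewrite -(nth_index 0 xS) slopes_nth_mono ?k_le_x.
  by move: wx hw; lra.
split; first by apply: contraTneq x_lt_k => ->.
by rewrite lerN2 -(nth_index 0 xS) slopes_nth_mono // -ltnS (ltn_predK x_lt_k) x_lt_k ltnW.
Qed.

Variables (R : realType) (w : rat) (M : \bar R).
Hypothesis w_ge : - mu k <= w.
Hypothesis M_le_Delta : forall w', w' \in Delta l n a w ->
  (M <= eps l n a R w' *
          ((l%:R : R) ^ ((dww l n a w w' : int) - (alpha_left k : int)))%:E)%E.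
Hypothesis M_le_edge : k != 1%N -> (M <= (ratr (- mu k.-1 - w) : R)%:E)%E.
Hypothesis M_le_piPsi : forall x, x \in piPsi l n a w -> x != w ->
  (M <= (ratr (x - w) : R)%:E)%E.

Lemma dww_le w' p : p \in PL -> w' = (psi w - (p.2)%:R) / lpow p.1 ->
  (dww l n a w w' <= p.1)%N.
Proof.
move=> pPL w'E; rewrite /dww -minEnat.
by apply: (@ge_bigmin_seq _ nat _ PL n p _ (fun p0 => p0.1) pPL); rewrite /= w'E.
Qed.

Lemma le_gap_below d v p : p \in PL -> v \in Vi l n a d -> v < w ->
  w < pi_shift p v -> (M <= (ratr (pi_shift p v - w) : R)%:E)%E.
Proof.
move=> pPL vV vw wu; set q := v * lpow p.1 + (p.2)%:R; set u := pi_shift p v.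
have [[al be] pPL' uE] := pi_mem q.
have psi_lt : psi w < q.
  apply: le_lt_trans (psi_le w pPL') _; rewrite -ltrBrDr -ltr_pdivlMr ?lpow_gt0 //.
  by rewrite -uE.
set w' := (psi w - (p.2)%:R) / lpow p.1.
have w'_lt : w' < v by rewrite ltr_pdivrMr ?lpow_gt0 // ltrBlDr.
have w'_Delta : w' \in Delta l n a w.
  rewrite mem_filter (lt_eqF (lt_trans w'_lt vw)).
  exact: (map_f (fun p : nat * nat => (psi w - (p.2)%:R) / lpow p.1) pPL).
have [i [be' [pPL'' i_le psi_ge]]] := psi_attained_left w_ge.
set z := (dww l n a w w' : int) - (alpha_left k : int).
have l_gt0 : (0 : rat) < l%:R by rewrite ltr0n; case: l l_ge2.
have z_le : (l%:R : rat) ^ z <= lpow p.1 / lpow i.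
  rewrite -exprz_lpow ler_weXz2l ?ler1n ?(ltnW l_ge2) //.
  by apply: lerB; rewrite lez_nat ?(dww_le pPL).
apply: le_trans (M_le_Delta w'_Delta) _.
apply: le_trans (lee_wpmul2r _ (eps_le R (ex_intro _ d vV) w'_lt)) _.
  by rewrite lee_fin exprz_ge0 // ler0n.
rewrite -EFinM lee_fin -(ratr_nat R l) -fmorphXz -rmorphM ler_rat.
apply: le_trans (rescaled_gap_le (lpow_gt0 p.1) (lpow_gt0 i) erefl psi_ge (pi_ge q pPL'')).
by rewrite ler_pM2l ?subr_gt0.
Qed.

Lemma le_gap_Vi d u : u \in Vi l n a d -> w < u -> (M <= (ratr (u - w) : R)%:E)%E.
Proof.
elim: d u => [|d IH] u.
  move=> uV wu; have [k_neq1 mu_le] := Vi0_above w_ge uV wu.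
  by apply: le_trans (M_le_edge k_neq1) _; rewrite lee_fin ler_rat lerD2r.
move=> /Vi_succ[p pPL [v vV ->]] wu.
have [wv|vw|wv] := ltgtP w v.
- by apply: le_trans (IH v vV wv) _; rewrite lee_fin ler_rat lerD2r pi_shift_ge.
- exact: le_gap_below vV vw wu.
- rewrite -wv in wu *; apply: M_le_piPsi; last by rewrite (gt_eqF wu).
  exact/map_f/(map_f (fun p : nat * nat => w * lpow p.1 + (p.2)%:R)).
Qed.

Lemma le_eps_gap : (M <= eps l n a R w)%E.
Proof. by apply: le_eps => u [d uV]; apply: le_gap_Vi uV. Qed.

End MahlerOperator.

Theorem mainTheorem15 (R : realType) (K : fieldType) (l n : nat)
    (a : nat -> {poly K}) (w : rat) (k : nat) :
  (2 <= l)%N -> (1 <= n)%N -> a 0%N != 0 -> a n != 0 ->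
  - mu l n a (kappa l n a) < w ->
  (1 <= k <= kappa l n a)%N ->
  - mu l n a k <= w ->
  (k != 1%N -> w < - mu l n a k.-1) ->
  let M : \bar R :=
    Order.min
      (\big[Order.min/+oo%E]_(w' <- Delta l n a w)
          (eps l n a R w' *
             ((l%:R : R) ^ ((dww l n a w w' : int) - (alpha_left l n a k : int)))%:E)%E)
      (Order.min
        (if k == 1%N then +oo%E else ((ratr (- mu l n a k.-1 - w) : R))%:E)
        (let s := [seq x <- piPsi l n a w | x != w] in
         if s is [::] then +oo%E else ((ratr (smin s - w) : R))%:E)) in
  (M <= eps l n a R w)%E /\ (0%:E < M)%E /\
  (M = +oo%E \/ exists q : rat, 0 < q /\ M = ((ratr q : R))%:E).
Proof.
move=> l_ge2 _ a0_neq0 _ _ k_range w_ge w_lt M.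
have piPsi_gt x : x \in [seq x <- piPsi l n a w | x != w] -> w < x.
  rewrite mem_filter lt_neqAle eq_sym => /andP[-> /mapP[_ /mapP[p pPL ->] ->]].
  exact: pi_shift_ge.
have M_pos : pos_rat_or_infty M.
  apply: pos_rat_or_infty_min; last apply: pos_rat_or_infty_min.
  - apply: pos_rat_or_infty_bigmin => w' _; rewrite -(ratr_nat R l) -fmorphXz.
    apply: pos_rat_or_infty_mulr; first exact: eps_pos_rat_or_infty.
    by rewrite exprz_gt0 // ltr0n (ltn_trans _ l_ge2).
  - case: ifP => [_|k_neq1]; [by left|right].
    by exists (- mu l n a k.-1 - w); rewrite subr_gt0 w_lt ?k_neq1.
  - move: piPsi_gt (@smin_mem [seq x <- piPsi l n a w | x != w]).
    case: [seq x <- _ | _] => [|x s] s_gt s_mem; [by left|right].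
    by exists (smin (x :: s) - w); rewrite subr_gt0 s_gt ?s_mem.
split; last by split; [exact: pos_rat_or_infty_gt0|].
apply: (le_eps_gap l_ge2 a0_neq0 k_range w_ge).
- by move=> w' w'D; rewrite ge_min (ge_bigmin_seq _ _ _ _ w'D).
- by move=> k_neq1; rewrite ge_min (negbTE k_neq1) ge_min lexx orbT.
- move=> x xpi xw; rewrite !ge_min; apply/orP; right; apply/orP; right.
  have xs : x \in [seq x <- piPsi l n a w | x != w] by rewrite mem_filter xw.
  move: xs (smin_le xs); case: [seq x <- _ | _] => // y s _ smin_le_x.
  by rewrite lee_fin ler_rat lerD2r.
Qed.
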